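(* Let $X=\{x_1,\ldots,x_n\}\subset\mathbb{R}^d$ be a configuration of dimension $d$ (affine hull equal to $\mathbb{R}^d$), and suppose $\Delta_{d+2\,\ldots\, n}\neq 0$. Then a weight vector $(w_1,\ldots,w_n)$ belongs to $\mathbb{W}_0(X)$ if and only if \[(-1)^{i-d}\,w_i\,\Delta_{d+2\,\ldots\, n}=\sum_{l=d+2}^n w_l\,\Delta_{i\,d+2\,\ldots\,\widehat{l}\,\ldots\, n},\qquad i=1,\ldots,d+1,\] where $\widehat{l}$ indicates that the index $l$ is omitted from the list.
   Context: $\mathbb{W}_0(X)\subseteq\mathbb{R}^n$ is the space of weight vectors $(w_1,\ldots,w_n)$ with $\sum_j w_j=0$ and $\sum_j w_jx_j=0$ (equivalently $\sum_j w_j\overrightarrow{px_j}=\overrightarrow{O}$ for all $p$). For indices $j_1<\cdots<j_\beta$, $\Delta_{j_1\ldots j_\beta}$ denotes the oriented volume of the subconfiguration $X\setminus\{x_{j_1},\ldots,x_{j_\beta}\}$: when this subconfiguration has $d+1$ points, it is the determinant of its $(d+1)\times(d+1)$ augmented configuration matrix, whose columns are $\binom{1}{x_j}$ for the remaining points $x_j$ in increasing order of index (and the volume is zero whenever the subconfiguration is not a $d$-simplex). In the indices $i\,d+2\ldots\widehat{l}\ldots n$, the removed points are $x_i$ and all $x_k$ with $d+2\le k\le n$, $k\ne l$. *)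

(* Points of R^d are column vectors 'cV[R]_d; the
   configuration X = {x_1,...,x_n} is a map x : 'I_n -> 'cV[R]_d
   (0-based: paper index j corresponds to ordinal j-1). *)
From HB Require Import structures.
From mathcomp Require Import all_boot all_order all_algebra.
From mathcomp Require Import reals.
Set Implicit Arguments. Unset Strict Implicit. Unset Printing Implicit Defensive.
Import Order.TTheory GRing.Theory Num.Theory.
Local Open Scope ring_scope.

Section Config.
Variables (R : realType) (d n : nat) (x : 'I_n -> 'cV[R]_d).

Definition full_dim : Prop :=
  forall y : 'cV[R]_d, exists w : 'I_n -> R,
    \sum_(j < n) w j = 1 /\ \sum_(j < n) w j *: x j = y.

Definition W0 (w : 'I_n -> R) : Prop :=
  \sum_(j < n) w j = 0 /\ \sum_(j < n) w j *: x j = 0.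

Definition aug (j : 'I_n) : 'cV[R]_(1 + d) := col_mx (1%:M : 'M[R]_1) (x j).

Definition ovol (S : {set 'I_n}) : R :=
  if #|S| == (1 + d)%N then
    \det (\matrix_(r < 1 + d, k < 1 + d) (nth 0 (map aug (enum S)) k) r ord0)
  else 0.

(* Delta_T : oriented volume of X \ {x_j | j in T} *)
Definition Delta (T : {set 'I_n}) : R := ovol (~: T).

End Config.

(* Let A be the augmented matrix of x_1, ..., x_(d+1), so that
   Delta_(d+2...n) = det A <> 0, and let a_j be the augmented column of x_j.
   Deleting column i of A and appending a_l gives the matrix of
   Delta_(i d+2...^l...n); moving a_l back into slot i costs the sign
   (-1)^(d+1-i), and by Cramer's rule the determinant of A with column i
   replaced by a_l is the i-th entry of adj(A) a_l.  Since adj(A) A = det A,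
   the i-th relation says exactly that the i-th entry of
   adj(A) (sum_j w_j a_j) vanishes.  As adj A is invertible, the relations
   together say sum_j w_j a_j = 0, i.e. w is in W_0(X). *)

From HB Require Import structures.
From mathcomp Require Import all_boot all_order all_algebra.
From mathcomp Require Import reals.
From mathcomp Require Import fingroup perm.
Import Order.TTheory GRing.Theory Num.Theory.
Local Open Scope ring_scope.
Set Implicit Arguments. Unset Strict Implicit. Unset Printing Implicit Defensive.

Lemma map_val_enum n (S : {set 'I_n}) (P : pred nat) :
  (forall k : 'I_n, (k \in S) = P k) -> map val (enum S) = filter P (iota 0 n).
Proof.
move=> memS; rewrite -val_enum_ord filter_map enumT /enum_mem.
by congr map; apply: eq_filter => k; rewrite /= memS.
Qed.

Lemma filter_iota_predC1 i d : (i <= d)%N ->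
  [seq k <- iota 0 d.+1 | k != i] = map (bump i) (iota 0 d).
Proof.
move=> le_id; rewrite -(subnKC le_id) -addnS !iotaD filter_cat map_cat /=.
rewrite eqxx add0n; congr (_ ++ _).
  rewrite map_id_in; last first.
    by move=> k; rewrite mem_iota /bump add0n => /andP[_ /ltn_geF ->].
  by apply/all_filterP/allP => k; rewrite mem_iota => /andP[_ /ltn_eqF ->].
rewrite (all_filterP _); last first.
  by apply/allP => k; rewrite mem_iota => /andP[/gtn_eqF ->].
rewrite -add1n iotaDl.
apply/eq_in_map => k; rewrite mem_iota /bump => /andP[-> _].
by rewrite addnC.
Qed.

Lemma expN1z_sub (R : unitRingType) (a b : nat) :
  (-1 : R) ^ (a%:Z - b%:Z) = (-1) ^+ (odd a (+) odd b).
Proof. by rewrite exprzDr ?unitrN1 // -exprz_inv invrN1 signr_addb !signr_odd. Qed.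

Section ColumnReplacement.
Variable R : comRingType.

Definition set_col m n (A : 'M[R]_(m, n)) (j : 'I_n) (v : 'cV[R]_m) : 'M[R]_(m, n) :=
  \matrix_(r, k) if k == j then v r ord0 else A r k.

Lemma det_set_col n (A : 'M[R]_n) j v : \det (set_col A j v) = (\adj A *m v) j ord0.
Proof.
rewrite (expand_det_col _ j) mxE; apply: eq_bigr => r _.
rewrite !mxE eqxx mulrC; congr (_ * _ * _); congr (\det _).
by apply/matrixP => a b; rewrite !mxE eq_sym (negbTE (neq_lift _ _)).
Qed.

Lemma det_col_perm n (s : 'S_n) (A : 'M[R]_n) : \det (col_perm s A) = (-1) ^+ s * \det A.
Proof. by rewrite col_permE det_mulmx det_perm odd_permV mulrC. Qed.

Lemma adj_mul_col n (A : 'M[R]_n) i j : (\adj A *m col j A) i ord0 = \det A *+ (i == j).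
Proof. by rewrite colE mulmxA mul_adj_mx mul_scalar_mx !mxE eqxx andbT mulr_natr. Qed.

End ColumnReplacement.

Lemma adj_mulmx_eq0 (F : fieldType) n (A : 'M[F]_n) (v : 'cV[F]_n) :
  \det A != 0 -> (\adj A *m v == 0) = (v == 0).
Proof.
move=> nzA; apply/eqP/eqP => [adjv0|->]; last exact: mulmx0.
have : \det A *: v == 0 by rewrite -mul_scalar_mx -mul_mx_adj -mulmxA adjv0 mulmx0.
by rewrite scaler_eq0 (negbTE nzA) => /eqP.
Qed.

Section Configuration.
Variables (R : realType) (d n : nat) (x : 'I_n -> 'cV[R]_d).

Lemma W0_aug w : W0 x w <-> \sum_j w j *: aug x j = 0.
Proof.
have -> : \sum_j w j *: aug x j = col_mx (\sum_j w j)%:M (\sum_j w j *: x j).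
  apply: (big_rec3 (fun V a b => V = col_mx a%:M b)); first by rewrite raddf0 col_mx0.
  by move=> j V a b _ ->; rewrite /aug scale_col_mx add_col_mx scalemx1 raddfD.
rewrite /W0; split => [[-> ->]|/eqP]; first by rewrite raddf0 col_mx0.
rewrite col_mx_eq0 => /andP[/eqP/matrixP/(_ ord0 ord0) + /eqP ->].
by rewrite !mxE.
Qed.

Lemma ovol_map_enum (S : {set 'I_n}) (f : 'I_(1 + d) -> 'I_n) :
  map val (enum S) = map (val \o f) (enum 'I_(1 + d)) ->
  ovol x S = \det (\matrix_(r, k) aug x (f k) r ord0).
Proof.
rewrite map_comp => /(inj_map val_inj) enumS.
rewrite /ovol cardE enumS size_map size_enum_ord eqxx; congr (\det _).
apply/matrixP => r k; rewrite [LHS]mxE [RHS]mxE -map_comp (nth_map k) ?size_enum_ord //.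
by rewrite nth_ord_enum.
Qed.

Lemma ovol_neq0_card S : ovol x S != 0 -> #|S| = (1 + d)%N.
Proof. by rewrite /ovol; case: ifP => [/eqP | _] //; rewrite eqxx. Qed.

Hypothesis lt_dn : (d < n)%N.

Definition base_mx : 'M[R]_(1 + d) := \matrix_(r, k) aug x (widen_ord lt_dn k) r ord0.

Lemma col_base_mx k : col k base_mx = aug x (widen_ord lt_dn k).
Proof. by apply/matrixP => r j; rewrite !mxE [j]ord1. Qed.

Lemma Delta_tail : Delta x [set k : 'I_n | (d.+1 <= k)%N] = \det base_mx.
Proof.
rewrite /Delta (ovol_map_enum (f := widen_ord lt_dn)) //.
rewrite (@map_val_enum _ _ (fun k => k < d.+1)%N) => [|k]; last by rewrite !inE -ltnNge.
by rewrite (filter_iota_ltn 0 lt_dn) (eq_map (g := val)) // val_enum_ord.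
Qed.

Lemma Delta_set_col (i : 'I_(1 + d)) (l : 'I_n) : (d < l)%N ->
  Delta x (widen_ord lt_dn i |: [set k : 'I_n | (d.+1 <= k)%N && (k != l)])
  = (-1) ^+ (odd i (+) odd d) * \det (set_col base_mx i (aug x l)).
Proof.
(* q sends the last slot to i and the slots i, ..., d - 1 one step up: it moves
   the appended column a_l into slot i. *)
move=> lt_dl; set q := lift_perm ord_max i 1.
have -> : odd i (+) odd d = q by rewrite odd_lift_perm odd_perm1 addbF addbC.
rewrite -det_col_perm /Delta.
rewrite (ovol_map_enum (f := fun k => if q k == i then l else widen_ord lt_dn (q k))).
  by congr (\det _); apply/matrixP => r k; rewrite !mxE; case: eqP.
rewrite (@map_val_enum _ _ (fun k => (k != i) && ((k < d.+1) || (k == l)))%N); last first.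
  by move=> k; rewrite !inE negb_or negb_and -ltnNge negbK.
rewrite enum_ordSr map_rcons -cats1 /= lift_perm_id eqxx.
rewrite -[in iota 0 n](subnKC lt_dn) iotaD filter_cat; congr (_ ++ _).
  rewrite (@eq_in_filter _ _ (predC1 (val i))); last first.
    by move=> k; rewrite mem_iota add0n /= => ->; rewrite andbT.
  rewrite (@filter_iota_predC1 i d (ltn_ord i)) -val_enum_ord -!map_comp.
  apply: eq_map => k /=.
  have -> : widen_ord (leqnSn d) k = lift ord_max k.
    by apply: val_inj; rewrite /= /bump leqNgt ltn_ord.
  by rewrite lift_perm_lift perm1 eq_sym (negbTE (neq_lift _ _)).
rewrite (@eq_in_filter _ _ (pred1 (val l))); last first.
  move=> k; rewrite mem_iota add0n => /andP[le_dk _] /=.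
  by rewrite ltnNge le_dk (gtn_eqF (leq_trans (ltn_ord i) le_dk)).
by rewrite filter_pred1_uniq ?iota_uniq // mem_iota add0n subnKC // lt_dl ltn_ord.
Qed.

Lemma adj_base_mx_sum w (i : 'I_(1 + d)) :
  (\adj base_mx *m \sum_j w j *: aug x j) i ord0
  = w (widen_ord lt_dn i) * \det base_mx
    + \sum_(l < n | (d.+1 <= l)%N) w l * \det (set_col base_mx i (aug x l)).
Proof.
rewrite mulmx_sumr summxE (bigID (fun j : 'I_n => (j < d.+1)%N)) /=; congr (_ + _).
  rewrite (bigD1 (widen_ord lt_dn i)) ?ltn_ord //= big1 ?addr0 => [|j /andP[lt_jd neq_ji]].
    by rewrite -scalemxAr mxE -col_base_mx adj_mul_col eqxx mulr1n.
  have -> : j = widen_ord lt_dn (Ordinal lt_jd) by apply: val_inj.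
  rewrite -scalemxAr mxE -col_base_mx adj_mul_col (_ : (i == _) = false) ?mulr0 //.
  by apply/negbTE; rewrite eq_sym.
rewrite (eq_bigl (fun l : 'I_n => (d.+1 <= l)%N)) => [|l]; last by rewrite -leqNgt.
by apply: eq_bigr => l _; rewrite -scalemxAr mxE det_set_col.
Qed.

Lemma Delta_relation_adjE w (i : 'I_(1 + d)) :
  (-1) ^ ((widen_ord lt_dn i).+1%:Z - d%:Z) * w (widen_ord lt_dn i)
      * Delta x [set k : 'I_n | (d.+1 <= k)%N]
    = \sum_(l < n | (d.+1 <= l)%N)
        w l * Delta x (widen_ord lt_dn i |: [set k : 'I_n | (d.+1 <= k)%N && (k != l)])
  <-> (\adj base_mx *m \sum_j w j *: aug x j) i ord0 = 0.
Proof.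
rewrite adj_base_mx_sum Delta_tail expN1z_sub /= addNb signrN.
under eq_bigr => l lt_dl do rewrite Delta_set_col // mulrCA.
rewrite -mulr_sumr -mulrA mulNr -mulrN; set s := (-1) ^+ _.
split => [/(can_inj (signrMK _)) <- | /eqP]; first by rewrite addrN.
by rewrite addrC addr_eq0 => /eqP ->.
Qed.

End Configuration.

Theorem theorem4p7 (R : realType) (d n : nat) (x : 'I_n -> 'cV[R]_d) :
  full_dim x ->
  Delta x [set k : 'I_n | (d.+1 <= k)%N] != 0 ->
  forall w : 'I_n -> R,
    W0 x w <->
    (forall i : 'I_n, (i < d.+1)%N ->
       (-1) ^ ((i.+1)%:Z - d%:Z) * w i * Delta x [set k : 'I_n | (d.+1 <= k)%N]
       = \sum_(l < n | (d.+1 <= l)%N)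
           w l * Delta x (i |: [set k : 'I_n | (d.+1 <= k)%N && (k != l)])).
Proof.
move=> _ nz_Delta w.
have lt_dn : (d < n)%N by rewrite -[n]card_ord -add1n -(ovol_neq0_card nz_Delta) max_card.
rewrite W0_aug; split => [V0 i lt_id | eqs].
  have -> : i = widen_ord lt_dn (Ordinal lt_id) by exact: val_inj.
  by apply/Delta_relation_adjE; rewrite V0 mulmx0 mxE.
rewrite (Delta_tail _ lt_dn) in nz_Delta.
apply/eqP; rewrite -(adj_mulmx_eq0 _ nz_Delta); apply/eqP/matrixP => k j.
rewrite [j]ord1 [RHS]mxE; apply/(Delta_relation_adjE _ lt_dn)/eqs; exact: (ltn_ord k).
Qed.
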